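(* For every vertex $(r,t,s)$ of the Farey tree $\mathrm{F}\mathbb T$, one has $\Omega(t)=\Omega(r)^{-1}\,xyz\,\Omega(s)^{-1}$ in $\mathfrak F_3$.
   Context: $\mathfrak F_3$ is the free group on $\{x,y,z\}$. Farey tree $\mathrm{F}\mathbb T$: rooted planar binary tree with root $(\frac01,\frac11,\frac10)$, and each vertex $(\frac ab,\frac cd,\frac ef)$ has left child $(\frac ab,\frac{a+c}{b+d},\frac cd)$ and right child $(\frac cd,\frac{c+e}{d+f},\frac ef)$; $\frac10$ represents $\infty$. Every positive rational $t$ occurs as the middle entry of exactly one vertex. Word tree $\mathrm{W}\mathbb T$: rooted planar binary tree with vertices in $\mathfrak F_3^3$, root $(x,y,z)$, and a vertex $(a,b,c)$ has left child $(a,bcb^{-1},b)$ and right child $(b,b^{-1}ab,c)$. $\Omega(t)$ for positive rational $t$: the middle entry of the vertex of $\mathrm{W}\mathbb T$ at the same position (same sequence of left/right moves from the root) as the unique vertex of $\mathrm{F}\mathbb T$ with middle entry $t$; $\Omega(\frac01)=x$, $\Omega(\frac10)=z$. *)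

From mathcomp Require Import all_boot.
From Stdlib Require Import ClassicalEpsilon.
Set Implicit Arguments. Unset Strict Implicit. Unset Printing Implicit Defensive.

(** * The free group F_3 on {x, y, z}
    Elements are represented by words over letters (generator, inverted?);
    a word denotes a group element, and two words are equal in F_3 iff they
    have the same free reduction. *)
Definition letter := ('I_3 * bool)%type.
Definition word := seq letter.

Definition inv_letter (l : letter) : letter := (l.1, ~~ l.2).

Definition push (l : letter) (w : word) : word :=
  match w with
  | l' :: w' => if l' == inv_letter l then w' else l :: w
  | [::] => [:: l]
  end.

Definition reduce (w : word) : word := foldr push [::] w.

Definition F3eq (u v : word) : Prop := reduce u = reduce v.

Definition wmul (u v : word) : word := u ++ v.
Definition winv (u : word) : word := rev (map inv_letter u).

Definition gen (i : 'I_3) : word := [:: (i, false)].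
Definition gx : word := gen (@Ordinal 3 0 isT).
Definition gy : word := gen (@Ordinal 3 1 isT).
Definition gz : word := gen (@Ordinal 3 2 isT).

(** * Fractions a/b as pairs (a, b); 1/0 represents infinity. *)
Definition frac := (nat * nat)%type.
Definition frac_eq (f g : frac) : bool := f.1 * g.2 == f.2 * g.1.

(** * Positions in a rooted planar binary tree: sequence of moves from the
    root, first move first; false = left child, true = right child. *)
Definition tpath := seq bool.

Definition ftvertex := (frac * frac * frac)%type.
Definition ft_root : ftvertex := ((0, 1), (1, 1), (1, 0)).
Definition ft_child (v : ftvertex) (right : bool) : ftvertex :=
  let: (a, c, e) := v in
  let m1 := (a.1 + c.1, a.2 + c.2) in
  let m2 := (c.1 + e.1, c.2 + e.2) in
  if right then (c, m2, e) else (a, m1, c).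
Definition FT (p : tpath) : ftvertex := foldl ft_child ft_root p.

Definition wtvertex := (word * word * word)%type.
Definition wt_root : wtvertex := (gx, gy, gz).
Definition wt_child (v : wtvertex) (right : bool) : wtvertex :=
  let: (a, b, c) := v in
  if right then (b, wmul (winv b) (wmul a b), c)
  else (a, wmul b (wmul c (winv b)), b).
Definition WT (p : tpath) : wtvertex := foldl wt_child wt_root p.

Definition mid3 {T : Type} (v : T * T * T) : T := v.1.2.

(** * Omega: Omega(0/1) = x, Omega(1/0) = z; for a positive rational t,
    the middle entry of the WT-vertex at the position of the (unique)
    FT-vertex whose middle entry is t. *)
Definition Omega (t : frac) : word :=
  if t.2 == 0 then gz
  else if t.1 == 0 then gx
  else match excluded_middle_informative
               (exists p : tpath, frac_eq (mid3 (FT p)) t) with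
       | left H => mid3 (WT (proj1_sig (constructive_indefinite_description _ H)))
       | right _ => [::]
       end.

From mathcomp Require Import all_boot zify.
From Stdlib Require Import ClassicalEpsilon.

Set Implicit Arguments.
Unset Strict Implicit.
Unset Printing Implicit Defensive.

(* At every vertex [(A, B, C)] of the word tree, [B = A^-1 xyz C^-1] in F_3:
   this holds at the root [(x, y, z)] and both child rules preserve it by free
   cancellation.  The Farey tree is a binary search tree for the order of
   fractions, its vertices being unimodular triples [(r, r + s, s)]; so every
   middle entry occurs at a single position, and [Omega] maps the entries of
   the Farey vertex at position [p] to those of the word-tree vertex at [p]. *)

Lemma inv_letterK : involutive inv_letter.
Proof. by case=> i b; rewrite /inv_letter /= negbK. Qed.

Definition reduced (w : word) : bool :=
  sorted (fun a b => b != inv_letter a) w.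

Lemma reduced_push l w : reduced w -> reduced (push l w).
Proof.
case: w => [//|a w] /= w_red; case: ifP => [_|/negbT a_neq].
  exact: path_sorted w_red.
by rewrite /= a_neq.
Qed.

Lemma push_inv_letter l w : reduced w -> push (inv_letter l) (push l w) = w.
Proof.
case: w => [|a w] /=; first by rewrite inv_letterK eqxx.
case: ifP => [/eqP -> | _] w_red; last by rewrite /= inv_letterK eqxx.
case: w w_red => [|b w] //= /andP[b_neq _].
by rewrite (negbTE b_neq).
Qed.

(* [act u w] is the reduced form of [u ++ w] when [w] is reduced. *)
Definition act (u w : word) : word := foldr push w u.

Lemma reduced_act u w : reduced w -> reduced (act u w).
Proof. by elim: u => //= l u IHu w_red; apply/reduced_push/IHu. Qed.

Lemma reduced_reduce u : reduced (reduce u).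
Proof. exact: reduced_act. Qed.

Lemma act_cat u v w : act (u ++ v) w = act u (act v w).
Proof. exact: foldr_cat. Qed.

Lemma reduce_cat u v : reduce (u ++ v) = act u (reduce v).
Proof. exact: act_cat. Qed.

Lemma act_push l r w : reduced w -> act (push l r) w = push l (act r w).
Proof.
case: r => [//|a r] /= w_red; case: ifP => [/eqP -> | _] //=.
by rewrite -{1}[l]inv_letterK push_inv_letter ?reduced_act.
Qed.

Lemma act_reduce u w : reduced w -> act (reduce u) w = act u w.
Proof. by move=> w_red; elim: u => //= l u IHu; rewrite act_push ?IHu. Qed.

Lemma winv_cons l u : winv (l :: u) = winv u ++ [:: inv_letter l].
Proof. by rewrite /winv /= rev_cons cats1. Qed.

Lemma winvK : involutive winv.
Proof. by move=> u; rewrite /winv map_rev revK (mapK inv_letterK). Qed.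

Lemma act_winvK u w : reduced w -> act (winv u) (act u w) = w.
Proof.
elim: u w => //= l u IHu w w_red.
by rewrite winv_cons act_cat /= push_inv_letter ?IHu ?reduced_act.
Qed.

Lemma F3eq_catl u v v' : F3eq v v' -> F3eq (u ++ v) (u ++ v').
Proof. by rewrite /F3eq !reduce_cat => ->. Qed.

Lemma F3eq_catr u u' v : F3eq u u' -> F3eq (u ++ v) (u' ++ v).
Proof.
rewrite /F3eq !reduce_cat => eq_u.
by rewrite -act_reduce ?reduced_reduce // eq_u act_reduce ?reduced_reduce.
Qed.

Lemma F3eq_winvl w v : F3eq (winv w ++ w ++ v) v.
Proof. by rewrite /F3eq !reduce_cat act_winvK ?reduced_reduce. Qed.

Lemma F3eq_winvr w v : F3eq (w ++ winv w ++ v) v.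
Proof. by rewrite -{1}(winvK w); apply: F3eq_winvl. Qed.

Definition xyz : word := gx ++ gy ++ gz.

Lemma WT_relation p : let: (A, B, C) := WT p in F3eq B (winv A ++ xyz ++ winv C).
Proof.
elim/last_ind: p => [|p b]; first by [].
rewrite /WT foldl_rcons -/(WT p); case: (WT p) => [[A B] C] eq_B.
case: b; rewrite /wt_child /wmul.
  apply: F3eq_catl; rewrite /F3eq (F3eq_catl A eq_B).
  exact: F3eq_winvr.
rewrite /F3eq (F3eq_catr _ eq_B) -catA -(catA xyz).
by do 2!apply: F3eq_catl; apply: F3eq_winvl.
Qed.

Definition flt (f g : frac) : bool := f.1 * g.2 < g.1 * f.2.
Definition mediant (f g : frac) : frac := (f.1 + g.1, f.2 + g.2).
Definition unimodular (f g : frac) : bool := g.1 * f.2 == f.1 * g.2 + 1.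

Definition farey_triple (v : ftvertex) : bool :=
  let: (r, t, s) := v in (t == mediant r s) && unimodular r s.

Lemma frac_eq_nflt f g : frac_eq f g -> ~~ flt f g && ~~ flt g f.
Proof. by rewrite /frac_eq /flt => /eqP eq_fg; apply/andP; split; nia. Qed.

Lemma flt_trans f g h : 0 < f.2 -> 0 < g.2 -> flt f g -> flt g h -> flt f h.
Proof. by case: f g h => [f1 f2] [g1 g2] [h1 h2]; rewrite /flt /=; nia. Qed.

Lemma unimodular_flt r s : unimodular r s -> flt r s.
Proof. by rewrite /unimodular /flt => /eqP ->; rewrite addn1. Qed.

Lemma unimodular_gt0 r s : unimodular r s -> 0 < s.1 /\ 0 < r.2.
Proof. by rewrite /unimodular => /eqP; nia. Qed.

Lemma unimodular_mediantl r s : unimodular r s -> unimodular r (mediant r s).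
Proof. by rewrite /unimodular /= => /eqP eq_rs; apply/eqP; nia. Qed.

Lemma unimodular_mediantr r s : unimodular r s -> unimodular (mediant r s) s.
Proof. by rewrite /unimodular /= => /eqP eq_rs; apply/eqP; nia. Qed.

Lemma farey_child v b : farey_triple v -> farey_triple (ft_child v b).
Proof.
case: v => [[r t] s] /andP[/eqP -> uni_rs]; rewrite /ft_child.
by case: b; rewrite /= eqxx ?unimodular_mediantl ?unimodular_mediantr.
Qed.

Lemma farey_descendant v p : farey_triple v -> farey_triple (foldl ft_child v p).
Proof. by elim: p v => //= b p IHp v farey_v; apply/IHp/farey_child. Qed.

Lemma farey_between r t s : farey_triple (r, t, s) -> flt r t && flt t s.
Proof.
case/andP=> /eqP -> uni_rs.
by rewrite !unimodular_flt ?unimodular_mediantl ?unimodular_mediantr.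
Qed.

Lemma farey_mid_gt0 v : farey_triple v -> 0 < (mid3 v).1 /\ 0 < (mid3 v).2.
Proof.
case: v => [[r t] s] /andP[/eqP -> /unimodular_gt0[s1_gt0 r2_gt0]] /=.
by rewrite !addn_gt0 s1_gt0 r2_gt0 orbT.
Qed.

Lemma farey_descendant_between r t s p : farey_triple (r, t, s) ->
  let m := mid3 (foldl ft_child (r, t, s) p) in flt r m && flt m s.
Proof.
elim: p r t s => [|b p IHp] r t s farey_rts; first exact: farey_between.
have /andP[lt_rt lt_ts] := farey_between farey_rts.
have [_ t2_gt0] := farey_mid_gt0 farey_rts.
have /andP[_ /unimodular_gt0[_ r2_gt0]] := farey_rts.
have farey_c := farey_child b farey_rts.
have [_ m2_gt0] := farey_mid_gt0 (farey_descendant p farey_c).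
move: farey_c m2_gt0; case: b => /= farey_c m2_gt0.
  have /andP[lt_tm ->] := IHp _ _ _ farey_c.
  by rewrite (flt_trans r2_gt0 t2_gt0 lt_rt lt_tm).
have /andP[-> lt_mt] := IHp _ _ _ farey_c.
by rewrite (flt_trans m2_gt0 t2_gt0 lt_mt lt_ts).
Qed.

Lemma farey_subtree v b p : farey_triple v ->
  let m := mid3 (foldl ft_child (ft_child v b) p) in
  if b then flt (mid3 v) m else flt m (mid3 v).
Proof.
case: v => [[r t] s] /(farey_child b).
by case: b => /= /(farey_descendant_between p)/andP[].
Qed.

Lemma farey_path_inj v p q : farey_triple v ->
  frac_eq (mid3 (foldl ft_child v p)) (mid3 (foldl ft_child v q)) -> p = q.
Proof.
elim: p v q => [|b p IHp] v [|b' q] farey_v //= eq_pq.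
- have /andP[nlt_pq nlt_qp] := frac_eq_nflt eq_pq.
  by move: (farey_subtree b' q farey_v) nlt_pq nlt_qp; case: b' {eq_pq} => /= ->.
- have /andP[nlt_pq nlt_qp] := frac_eq_nflt eq_pq.
  by move: (farey_subtree b p farey_v) nlt_pq nlt_qp; case: b {eq_pq IHp} => /= ->.
case: (eqVneq b b') eq_pq => [<- | neq_b] eq_pq.
  by rewrite (IHp _ _ (farey_child b farey_v) eq_pq).
have /andP[nlt_pq nlt_qp] := frac_eq_nflt eq_pq.
have [_ t2_gt0] := farey_mid_gt0 farey_v.
have [_ mp2_gt0] := farey_mid_gt0 (farey_descendant p (farey_child b farey_v)).
have [_ mq2_gt0] := farey_mid_gt0 (farey_descendant q (farey_child b' farey_v)).
move: (farey_subtree b p farey_v) (farey_subtree b' q farey_v) nlt_pq nlt_qp.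
case: b b' neq_b {eq_pq IHp} mp2_gt0 mq2_gt0 => [] [] //= _ mp2_gt0 mq2_gt0 lt_p lt_q.
  by rewrite (flt_trans mq2_gt0 t2_gt0 lt_q lt_p).
by rewrite (flt_trans mp2_gt0 t2_gt0 lt_p lt_q).
Qed.

Lemma farey_root : farey_triple ft_root.
Proof. by []. Qed.

Lemma Omega_FT_mid p : Omega (mid3 (FT p)) = mid3 (WT p).
Proof.
have [t1_gt0 t2_gt0] := farey_mid_gt0 (farey_descendant p farey_root).
rewrite /Omega -/(FT p) (gtn_eqF t1_gt0) (gtn_eqF t2_gt0).
case: excluded_middle_informative => [ex_p | no_p]; last first.
  by case: no_p; exists p; rewrite /frac_eq mulnC.
case: (constructive_indefinite_description _ ex_p) => p' /= eq_p'.
by rewrite (farey_path_inj farey_root eq_p').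
Qed.

Lemma Omega_FT p :
  let: (r, t, s) := FT p in let: (A, B, C) := WT p in
  [/\ Omega r = A, Omega t = B & Omega s = C].
Proof.
elim/last_ind: p => [|p b]; first by split; [| exact: (Omega_FT_mid [::]) |].
have := Omega_FT_mid (rcons p b).
rewrite /FT /WT !foldl_rcons -/(FT p) -/(WT p).
case: (FT p) => [[r t] s]; case: (WT p) => [[A B] C].
by case: b => /= Omega_m [Omega_r Omega_t Omega_s]; split.
Qed.

Theorem lemma3p8 (p : tpath) :
  let: (r, t, s) := FT p in
  F3eq (Omega t) (wmul (winv (Omega r)) (wmul (gx ++ gy ++ gz) (winv (Omega s)))).
Proof.
have := Omega_FT p; have := WT_relation p.
case: (FT p) => [[r t] s]; case: (WT p) => [[A B] C] rel_B [-> -> ->].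
exact: rel_B.
Qed.
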